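(* Let $\mathcal{C}$ be the MILP consisting of constraints (C1)–(C6) below for a binary tree ensemble $\mathcal{E}$, a set $F\subseteq\mathcal{F}$ of sensitive features and a gap $g$. Then the set of feasible solutions of $\mathcal{C}$ equals the set of feasible solutions of the MILP obtained by adding to $\mathcal{C}$ the constraints (UnAff) $l^{(1)}_n = l^{(2)}_n$ for every unaffected leaf $n\in\mathcal{U}$, and (Aff-bin) $\sum_{n\in\mathcal{A}\setminus\mathcal{U}}\left(l^{(1)}_n\, n.val - l^{(2)}_n\, n.val\right)\ge 2\delta$.
   Context: A decision tree is either a leaf $n$ with real value $n.val$ or an internal node with guard $X_f<\tau$ (feature $f$, constant $\tau$) and children $n.yes$ (taken when $x_f<\tau$) and $n.no$. A binary tree ensemble $\mathcal{E}$ is a finite set of such trees over feature set $\mathcal{F}$. For each feature $f$, let $\tau_{f1}<\tau_{f2}<\dots<\tau_{fK_f}$ be the distinct thresholds of guards on $f$ in the ensemble. Let $\mathcal{A}$ be the set of all leaves of all trees. For each internal node $n$, $TSet(n)$ is the set of leaves of the subtree rooted at $n.yes$ and $FSet(n)$ those of the subtree rooted at $n.no$. Let $g$ with $0\le g<0.5$ and $\delta=\mathrm{Sigmoid}^{-1}(0.5+g)$, where $\mathrm{Sigmoid}(z)=1/(1+e^{-z})$. Variables: for each copy $c\in\{1,2\}$, binary variables $p^{(c)}_{fk}\in\{0,1\}$ for every feature $f$ and $k\in\{1,\dots,K_f\}$ (intended meaning: $X_f<\tau_{fk}$), and continuous variables $0\le l^{(c)}_n\le 1$ for every leaf $n\in\mathcal{A}$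 (intended meaning: leaf $n$ is reached). Constraints of $\mathcal{C}$ (for each $c\in\{1,2\}$ where applicable): (C1) $p^{(c)}_{f1}\le p^{(c)}_{f2}\le\dots\le p^{(c)}_{fK_f}$ for each feature $f$; (C2) for each tree, the sum of $l^{(c)}_n$ over its leaves equals $1$; (C3) for each root node with guard $X_f<\tau_{fk}$: $1-\sum_{n\in FSet}l^{(c)}_n = p^{(c)}_{fk}=\sum_{n\in TSet}l^{(c)}_n$; (C4) for each non-root internal node with guard $X_f<\tau_{fk}$: $1-\sum_{n\in FSet}l^{(c)}_n \ge p^{(c)}_{fk}\ge\sum_{n\in TSet}l^{(c)}_n$; (C5) $p^{(1)}_{fk}=p^{(2)}_{fk}$ for every feature $f\notin F$ and every $k$; (C6) $\sum_{n\in\mathcal{A}}l^{(1)}_n\, n.val\ge\delta$ and $\sum_{n\in\mathcal{A}}l^{(2)}_n\, n.val\le-\delta$. A leaf is unaffected if no guard on the path from its tree's root to it involves a feature of $F$; $\mathcal{U}$ denotes the set of unaffected leaves. *)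

From Stdlib Require Import Reals List Lra.
Import ListNotations.
Open Scope R_scope.

(** Decision trees: a leaf with a real value, or an internal node with guard
    X_f < tau and children yes (taken when x_f < tau) and no. *)
Inductive tree : Type :=
| Leaf (val : R)
| Node (f : nat) (tau : R) (yes no : tree).

Definition ensemble := list tree.

(** Leaves of a tree, identified by their path from the root
    (true = yes-branch, false = no-branch), with their value and the list
    of features of the guards on the path from the root to them. *)
Fixpoint leaves (t : tree) : list (list bool * (R * list nat)) :=
  match t with
  | Leaf v => [([], (v, []))]
  | Node f _ y n =>
      map (fun x => (true :: fst x, (fst (snd x), f :: snd (snd x)))) (leaves y)
      ++ map (fun x => (false :: fst x, (fst (snd x), f :: snd (snd x)))) (leaves n)
  end.

Fixpoint nodes (t : tree) : list (list bool * (nat * R * tree * tree)) :=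
  match t with
  | Leaf _ => []
  | Node f tau y n =>
      ([], (f, tau, y, n))
      :: map (fun x => (true :: fst x, snd x)) (nodes y)
      ++ map (fun x => (false :: fst x, snd x)) (nodes n)
  end.

Definition lsum (xs : list R) : R := fold_right Rplus 0 xs.

Definition is_thr (E : ensemble) (f : nat) (tau : R) : Prop :=
  exists i t q y n, nth_error E i = Some t /\ In (q, (f, tau, y, n)) (nodes t).

(** A candidate assignment of the MILP variables (both copies).
    p c f tau : the binary variable p^(c)_{fk} where tau = tau_{fk};
    l c i q   : the leaf variable of the leaf at path q of tree number i. *)
Record assignment := {
  p1 : nat -> R -> R;  p2 : nat -> R -> R;
  l1 : nat -> list bool -> R;  l2 : nat -> list bool -> R }.

Definition sumsub (l : nat -> list bool -> R) (i : nat) (q : list bool) (s : tree) : R :=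
  lsum (map (fun x => l i (q ++ fst x)) (leaves s)).

Definition ens_sum (E : ensemble) (h : nat -> list bool -> R -> list nat -> R) : R :=
  lsum (map (fun i => match nth_error E i with
                      | Some t => lsum (map (fun x => h i (fst x) (fst (snd x)) (snd (snd x))) (leaves t))
                      | None => 0 end) (seq 0 (length E))).

Definition Sigmoid (z : R) : R := 1 / (1 + exp (- z)).
Definition Sigmoid_inv (y : R) : R := ln (y / (1 - y)).
Definition delta (g : R) : R := Sigmoid_inv (1/2 + g).

Definition copy_constraints (E : ensemble) (p : nat -> R -> R) (l : nat -> list bool -> R) : Prop :=
  (forall f tau, is_thr E f tau -> p f tau = 0 \/ p f tau = 1) /\
  (forall i t, nth_error E i = Some t -> forall x, In x (leaves t) ->
       0 <= l i (fst x) <= 1) /\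
  (* (C1) *)
  (forall f tau tau', is_thr E f tau -> is_thr E f tau' -> tau < tau' ->
       p f tau <= p f tau') /\
  (* (C2) *)
  (forall i t, nth_error E i = Some t -> sumsub l i [] t = 1) /\
  (* (C3) root nodes *)
  (forall i t f tau y n, nth_error E i = Some t -> t = Node f tau y n ->
       1 - sumsub l i [false] n = p f tau /\ p f tau = sumsub l i [true] y) /\
  (* (C4) non-root internal nodes *)
  (forall i t q f tau y n, nth_error E i = Some t -> In (q, (f, tau, y, n)) (nodes t) ->
       q <> [] ->
       1 - sumsub l i (q ++ [false]) n >= p f tau /\
       p f tau >= sumsub l i (q ++ [true]) y).

Definition feasible_C (E : ensemble) (F : list nat) (g : R) (s : assignment) : Prop :=
  copy_constraints E (p1 s) (l1 s) /\
  copy_constraints E (p2 s) (l2 s) /\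
  (* (C5) *)
  (forall f tau, ~ In f F -> is_thr E f tau -> p1 s f tau = p2 s f tau) /\
  (* (C6) *)
  ens_sum E (fun i q v _ => l1 s i q * v) >= delta g /\
  ens_sum E (fun i q v _ => l2 s i q * v) <= - delta g.

(** A leaf is affected iff some guard on its path uses a feature of F. *)
Definition affectedb (F : list nat) (fs : list nat) : bool :=
  existsb (fun f => existsb (Nat.eqb f) F) fs.

Definition UnAff (E : ensemble) (F : list nat) (s : assignment) : Prop :=
  forall i t, nth_error E i = Some t -> forall x, In x (leaves t) ->
    (forall f, In f (snd (snd x)) -> ~ In f F) ->
    l1 s i (fst x) = l2 s i (fst x).

Definition AffBin (E : ensemble) (F : list nat) (g : R) (s : assignment) : Prop :=
  ens_sum E (fun i q v fs => if affectedb F fs then l1 s i q * v - l2 s i q * v else 0)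
    >= 2 * delta g.

(** Because the p-variables are binary, each copy's leaf variables are forced:
    descending a tree from its root, the mass 1 given by (C2) is sent entirely
    into the yes- or the no-subtree according to p at the guard ((C3)/(C4) and
    l >= 0), so l_n is the product along n's path of p or 1 - p.  On the path
    of an unaffected leaf only non-sensitive features occur, where the two
    copies agree by (C5); hence (UnAff).  The unaffected leaves then cancel in
    the difference of the two sides of (C6), which is at least 2 delta; hence
    (Aff-bin). *)

From Stdlib Require Import Reals List Lra.
Import ListNotations.
Open Scope R_scope.

Lemma lsum_app (xs ys : list R) : lsum (xs ++ ys) = lsum xs + lsum ys.
Proof. induction xs as [|x xs IH]; simpl; [ring | rewrite IH; ring]. Qed.

Lemma lsum_map_ext {A} (f g : A -> R) (xs : list A) :
  (forall x, In x xs -> f x = g x) -> lsum (map f xs) = lsum (map g xs).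
Proof. intros H; now rewrite (map_ext_in f g xs H). Qed.

Lemma lsum_map_sub {A} (f g : A -> R) (xs : list A) :
  lsum (map (fun x => f x - g x) xs) = lsum (map f xs) - lsum (map g xs).
Proof. induction xs as [|x xs IH]; simpl; [ring | rewrite IH; ring]. Qed.

Lemma lsum_map_nonneg {A} (f : A -> R) (xs : list A) :
  (forall x, In x xs -> 0 <= f x) -> 0 <= lsum (map f xs).
Proof.
  induction xs as [|x xs IH]; simpl; intros H; [lra|].
  assert (0 <= f x) by auto. assert (0 <= lsum (map f xs)) by auto. lra.
Qed.

Lemma in_leaves_Node f tau y n x :
  In x (leaves (Node f tau y n)) ->
  exists (b : bool) (z : list bool * (R * list nat)),
    In z (leaves (if b then y else n)) /\ x = (b :: fst z, (fst (snd z), f :: snd (snd z))).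
Proof.
  simpl; rewrite in_app_iff, !in_map_iff.
  intros [[z [<- Hz]] | [z [<- Hz]]]; [exists true | exists false]; eauto.
Qed.

Lemma in_leaves_branch f tau y n (b : bool) (z : list bool * (R * list nat)) :
  In z (leaves (if b then y else n)) ->
  In (b :: fst z, (fst (snd z), f :: snd (snd z))) (leaves (Node f tau y n)).
Proof. intros Hz; destruct b; simpl; rewrite in_app_iff, !in_map_iff; eauto. Qed.

Lemma in_nodes_branch f tau y n (b : bool) (r : list bool) (d : nat * R * tree * tree) :
  In (r, d) (nodes (if b then y else n)) -> In (b :: r, d) (nodes (Node f tau y n)).
Proof.
  intros Hr; destruct b; simpl; right; rewrite in_app_iff, !in_map_iff;
    [left | right]; now exists (r, d).
Qed.

Lemma in_nodes_root t f tau y n : In ([], (f, tau, y, n)) (nodes t) -> t = Node f tau y n.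
Proof.
  destruct t; simpl; [tauto|]. intros [H | H]; [now inversion H|].
  rewrite in_app_iff, !in_map_iff in H.
  destruct H as [[z [H _]] | [z [H _]]]; discriminate.
Qed.

Lemma sumsub_Node l i q f tau y n :
  sumsub l i q (Node f tau y n) = sumsub l i (q ++ [true]) y + sumsub l i (q ++ [false]) n.
Proof.
  unfold sumsub; simpl. rewrite map_app, lsum_app, !map_map; simpl.
  f_equal; apply lsum_map_ext; intros; now rewrite <- app_assoc.
Qed.

Fixpoint path_weight (p : nat -> R -> R) (s : tree) (r : list bool) : R :=
  match s, r with
  | Node f tau y n, b :: r' =>
      (if b then p f tau else 1 - p f tau) * path_weight p (if b then y else n) r'
  | _, _ => 1
  end.

Definition guards_consistent (p : nat -> R -> R) (l : nat -> list bool -> R)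
    (i : nat) (q : list bool) (s : tree) : Prop :=
  forall r f tau y n, In (r, (f, tau, y, n)) (nodes s) ->
    (p f tau = 0 \/ p f tau = 1) /\
    1 - sumsub l i (q ++ r ++ [false]) n >= p f tau /\
    p f tau >= sumsub l i (q ++ r ++ [true]) y.

Lemma guards_consistent_branch p l i q f tau y n b :
  guards_consistent p l i q (Node f tau y n) ->
  guards_consistent p l i (q ++ [b]) (if b then y else n).
Proof.
  intros H r f' tau' y' n' Hin. rewrite <- !app_assoc.
  exact (H (b :: r) f' tau' y' n' (in_nodes_branch f tau y n b r _ Hin)).
Qed.

Lemma binary_guard_split (pv a b : R) :
  pv = 0 \/ pv = 1 -> 0 <= a -> 0 <= b -> 1 - b >= pv -> pv >= a ->
  a = (a + b) * pv /\ b = (a + b) * (1 - pv).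
Proof. intros [-> | ->] ? ? ? ?; split; lra. Qed.

Lemma leaf_eq_path_weight p l i : forall s q,
  guards_consistent p l i q s ->
  (forall x, In x (leaves s) -> 0 <= l i (q ++ fst x)) ->
  forall x, In x (leaves s) -> l i (q ++ fst x) = sumsub l i q s * path_weight p s (fst x).
Proof.
  induction s as [v | f tau y IHy n IHn]; intros q Hg Hl x Hx.
  - destruct Hx as [<- | []]. unfold sumsub; simpl. ring.
  - assert (Hl_branch : forall (b : bool) z, In z (leaves (if b then y else n)) ->
                                  0 <= l i ((q ++ [b]) ++ fst z)).
    { intros b z Hz. rewrite <- app_assoc. exact (Hl _ (in_leaves_branch f tau y n b z Hz)). }
    destruct (Hg [] f tau y n) as [Hbin [Hno Hyes]]; [now left|]. simpl in Hno, Hyes.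
    assert (Hyes0 : 0 <= sumsub l i (q ++ [true]) y) by exact (lsum_map_nonneg _ _ (Hl_branch true)).
    assert (Hno0 : 0 <= sumsub l i (q ++ [false]) n) by exact (lsum_map_nonneg _ _ (Hl_branch false)).
    destruct (binary_guard_split _ _ _ Hbin Hyes0 Hno0 Hno Hyes) as [Ey En].
    rewrite <- (sumsub_Node l i q f tau y n) in Ey, En.
    destruct (in_leaves_Node f tau y n x Hx) as [b [z [Hz ->]]]; simpl.
    replace (q ++ b :: fst z) with ((q ++ [b]) ++ fst z) by now rewrite <- app_assoc.
    pose proof (guards_consistent_branch p l i q f tau y n b Hg) as Hgb.
    destruct b; [rewrite (IHy _ Hgb (Hl_branch true) z Hz), Ey
                | rewrite (IHn _ Hgb (Hl_branch false) z Hz), En]; ring.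
Qed.

Lemma path_weight_agree p1 p2 : forall s x, In x (leaves s) ->
  (forall r f tau y n, In (r, (f, tau, y, n)) (nodes s) -> In f (snd (snd x)) ->
     p1 f tau = p2 f tau) ->
  path_weight p1 s (fst x) = path_weight p2 s (fst x).
Proof.
  induction s as [v | f tau y IHy n IHn]; intros x Hx Hp.
  - now destruct Hx as [<- | []].
  - destruct (in_leaves_Node f tau y n x Hx) as [b [z [Hz ->]]]; simpl.
    rewrite (Hp [] f tau y n (or_introl eq_refl) (or_introl eq_refl)).
    assert (Hp_branch : forall r f' tau' y' n',
              In (r, (f', tau', y', n')) (nodes (if b then y else n)) ->
              In f' (snd (snd z)) -> p1 f' tau' = p2 f' tau').
    { intros r f' tau' y' n' Hin Hf'. apply (Hp (b :: r) f' tau' y' n'); [|now right].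
      exact (in_nodes_branch f tau y n b r _ Hin). }
    destruct b; [rewrite (IHy z Hz Hp_branch) | rewrite (IHn z Hz Hp_branch)]; reflexivity.
Qed.

Lemma copy_constraints_leaf E p l i t :
  copy_constraints E p l -> nth_error E i = Some t ->
  forall x, In x (leaves t) -> l i (fst x) = path_weight p t (fst x).
Proof.
  intros [Hbin [Hl [_ [Hsum [Hroot Hinner]]]]] Ht x Hx.
  assert (Hg : guards_consistent p l i [] t).
  { intros r f tau y n Hin. split; [apply Hbin; now exists i, t, r, y, n|].
    destruct r as [|b r].
    - apply in_nodes_root in Hin. destruct (Hroot i t f tau y n Ht Hin). simpl; lra.
    - apply (Hinner i t (b :: r) f tau y n Ht Hin). discriminate. }
  change (l i (fst x)) with (l i ([] ++ fst x)).
  rewrite (leaf_eq_path_weight p l i t [] Hg (fun z Hz => proj1 (Hl i t Ht z Hz)) x Hx).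
  rewrite (Hsum i t Ht). ring.
Qed.

Lemma affectedb_false F fs : affectedb F fs = false -> forall f, In f fs -> ~ In f F.
Proof.
  intros H f Hf HF. apply Bool.not_true_iff_false in H. apply H.
  apply existsb_exists. exists f. split; [exact Hf|].
  apply existsb_exists. exists f. split; [exact HF | apply Nat.eqb_refl].
Qed.

Lemma feasible_C_UnAff E F g s : feasible_C E F g s -> UnAff E F s.
Proof.
  intros [C1 [C2 [C5 _]]] i t Ht x Hx Hun.
  rewrite (copy_constraints_leaf E _ _ i t C1 Ht x Hx), (copy_constraints_leaf E _ _ i t C2 Ht x Hx).
  apply path_weight_agree; [exact Hx|].
  intros r f tau y n Hin Hf. apply C5; [exact (Hun f Hf)|]. now exists i, t, r, y, n.
Qed.

Lemma ens_sum_ext E h1 h2 :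
  (forall i t, nth_error E i = Some t -> forall x, In x (leaves t) ->
     h1 i (fst x) (fst (snd x)) (snd (snd x)) = h2 i (fst x) (fst (snd x)) (snd (snd x))) ->
  ens_sum E h1 = ens_sum E h2.
Proof.
  intros H. unfold ens_sum. f_equal. apply map_ext. intros i.
  destruct (nth_error E i) eqn:Ht; [|reflexivity].
  apply lsum_map_ext. intros x Hx. eapply H; eauto.
Qed.

Lemma ens_sum_sub E h1 h2 :
  ens_sum E (fun i q v fs => h1 i q v fs - h2 i q v fs) = ens_sum E h1 - ens_sum E h2.
Proof.
  unfold ens_sum. rewrite <- lsum_map_sub. f_equal. apply map_ext. intros i.
  destruct (nth_error E i); [apply lsum_map_sub | ring].
Qed.

Lemma feasible_C_AffBin E F g s : feasible_C E F g s -> UnAff E F s -> AffBin E F g s.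
Proof.
  intros (_ & _ & _ & C6a & C6b) UA. unfold AffBin.
  rewrite (ens_sum_ext E _ (fun i q v fs => l1 s i q * v - l2 s i q * v)).
  - rewrite (ens_sum_sub E (fun i q v _ => l1 s i q * v) (fun i q v _ => l2 s i q * v)). lra.
  - intros i t Ht x Hx; simpl.
    destruct (affectedb F (snd (snd x))) eqn:Ha; [reflexivity|].
    rewrite (UA i t Ht x Hx (affectedb_false F _ Ha)). ring.
Qed.

Theorem theorem3 (E : ensemble) (F : list nat) (g : R) :
  0 <= g < 1/2 ->
  forall s : assignment,
    feasible_C E F g s <-> (feasible_C E F g s /\ UnAff E F s /\ AffBin E F g s).
Proof.
  intros _ s. split; [|tauto]. intros Hfeas.
  pose proof (feasible_C_UnAff E F g s Hfeas) as Hun.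
  exact (conj Hfeas (conj Hun (feasible_C_AffBin E F g s Hfeas Hun))).
Qed.
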